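(* Let $\alpha>-1$ and let $W(x,y)=\dfrac{x^{\alpha}y^{\alpha+1}e^{-x-y}}{x+y}$ on $(0,\infty)^2$. Let $\{p_k\}_{k\ge0}$, $\{q_k\}_{k\ge0}$ be the monic Cauchy–Laguerre biorthogonal polynomials, i.e. $\deg p_k=\deg q_k=k$, both monic, with $$\int_0^\infty\!\!\int_0^\infty p_k(x)q_l(y)W(x,y)\,dx\,dy=h_k\delta_{kl}.$$ Write $p_k(x)=\sum_{i=0}^k a_{k,i}x^i$ with $a_{k,k}=1$, and define for each $\beta\in\mathbb{N}$ the numbers $b_{\beta,i}$, $0\le i\le\beta$, recursively by $b_{\beta,0}=1$ and $b_{\beta,i}=-\sum_{j=0}^{i-1}b_{\beta,j}\,a_{\beta-j,\beta-i}$. Then for all integers $\beta\ge k\ge0$, $$\int_0^\infty\!\!\int_0^\infty x^{\beta}q_k(y)W(x,y)\,dx\,dy=b_{\beta,\beta-k}\,h_k.$$ *)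

From HB Require Import structures.
From mathcomp Require Import all_boot all_order all_algebra.
From mathcomp Require Import all_classical all_reals all_analysis.
Set Implicit Arguments. Unset Strict Implicit. Unset Printing Implicit Defensive.
Import Order.TTheory GRing.Theory Num.Theory.
Local Open Scope classical_set_scope.
Local Open Scope ring_scope.

Definition CLweight (R : realType) (alpha : R) (x y : R) : R :=
  x `^ alpha * y `^ (alpha + 1) * expR (- x - y) / (x + y).

Definition dint (R : realType) (f : R -> R -> R) : \bar R :=
  (\int[lebesgue_measure]_(x in `]0%R, +oo[%classic : set R)
     (\int[lebesgue_measure]_(y in `]0%R, +oo[%classic : set R) (f x y)%:E))%E.

Fixpoint bseq (R : ringType) (a : nat -> nat -> R) (beta i : nat) : seq R :=
  match i with
  | 0 => [:: 1]
  | i'.+1 =>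
      let s := bseq a beta i' in
      rcons s (- \sum_(j < i'.+1) s`_j * a (beta - j)%N (beta - i'.+1)%N)
  end.

Definition bcoef (R : ringType) (a : nat -> nat -> R) (beta i : nat) : R :=
  (bseq a beta i)`_i.

From Pilot Require Import Defs.
From HB Require Import structures.
From mathcomp Require Import all_boot all_order all_algebra zify.
From mathcomp Require Import all_classical all_reals all_analysis.
From mathcomp Require Import measurable_realfun exponential_distribution.
From mathcomp Require Import ring lra.

(* Since p_m = X^m + (lower terms), the triangular system can be inverted:
   X^beta = sum_j b_{beta,j} p_{beta-j}, and the recursion defining b_{beta,i}
   says exactly that the coefficient of X^(beta-i) in the right-hand side
   vanishes for i > 0.  For fixed x > 0 the inner integral
   G(x) = int_0^oo q_k(y) W(x,y) dy converges, its integrand being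
   O(e^(-y/2)); hence the double integral of x^beta q_k(y) W(x,y) equals
   int_0^oo x^beta G(x) dx = sum_j b_{beta,j} int_0^oo p_{beta-j}(x) G(x) dx.
   Each p_m G is integrable because its integral is the (finite)
   biorthogonality integral h_m delta_{mk}, so only j = beta - k survives. *)

Set Implicit Arguments.
Unset Strict Implicit.
Unset Printing Implicit Defensive.
Import Order.TTheory GRing.Theory Num.Theory.
Local Open Scope ring_scope.

Section BiorthogonalCoefficients.
Variables (R : nzRingType) (a : nat -> nat -> R) (beta : nat).

Lemma size_bseq i : size (Defs.bseq a beta i) = i.+1.
Proof. by elim: i => [|i IHi] //=; rewrite size_rcons IHi. Qed.

Lemma nth_bseq i j : (j <= i)%N -> (Defs.bseq a beta i)`_j = bcoef a beta j.
Proof.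
elim: i => [|i IHi]; first by rewrite leqn0 => /eqP ->.
rewrite leq_eqVlt => /orP[/eqP -> //|]; rewrite ltnS => le_ji.
by rewrite /= nth_rcons size_bseq ltnS le_ji IHi.
Qed.

Lemma bcoef0 : bcoef a beta 0 = 1.
Proof. by []. Qed.

Lemma bcoefS i : bcoef a beta i.+1 =
  - \sum_(j < i.+1) bcoef a beta j * a (beta - j)%N (beta - i.+1)%N.
Proof.
rewrite /bcoef /= nth_rcons size_bseq ltnn eqxx.
by congr (- _); apply: eq_bigr => j _; rewrite nth_bseq // -ltnS.
Qed.

Hypothesis a_diag : forall m, a m m = 1.

Lemma sum_bcoef_diag i :
  \sum_(j < i.+1) bcoef a beta j * a (beta - j)%N (beta - i)%N = (i == 0%N)%:R.
Proof.
case: i => [|i]; first by rewrite big_ord1 bcoef0 subn0 a_diag mulr1.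
by rewrite big_ord_recr /= a_diag mulr1 bcoefS addrN.
Qed.

End BiorthogonalCoefficients.

Lemma polyXn_bcoef (R : nzRingType) (p : nat -> {poly R}) (beta : nat) :
  (forall m, (p m)`_m = 1) -> (forall m, (size (p m) <= m.+1)%N) ->
  'X^beta = \sum_(j < beta.+1) bcoef (fun m i => (p m)`_i) beta j *: p (beta - j)%N.
Proof.
move=> p_lead p_size; apply/polyP => n.
rewrite coefXn coef_sum; under eq_bigr do rewrite coefZ.
have [le_nb|lt_bn] := leqP n beta; last first.
  rewrite gtn_eqF // big1 // => j _.
  rewrite nth_default ?mulr0 // (leq_trans (p_size _)) //.
  exact: leq_ltn_trans (leq_subr _ _) lt_bn.
have {le_nb} -> : n = (beta - (beta - n))%N by rewrite subKn.
move: (beta - n)%N (leq_subr n beta) => i le_ib.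
have -> : ((beta - i)%N == beta) = (i == 0%N) by apply/eqP/eqP; lia.
rewrite -[LHS](@sum_bcoef_diag _ (fun m i => (p m)`_i) beta p_lead i).
rewrite (big_ord_widen beta.+1
  (fun j => bcoef _ beta j * (p (beta - j)%N)`_(beta - i))) ?ltnS //.
rewrite big_mkcond; apply: eq_bigr => j _.
case: ltnP => // lt_ij; rewrite nth_default ?mulr0 //.
by rewrite (leq_trans (p_size _)) //; have := ltn_ord j; lia.
Qed.

Lemma fin_num_integral_integrable d (T : measurableType d) (R : realType)
    (mu : {measure set T -> \bar R}) (D : set T) (f : T -> \bar R) :
  measurable D -> measurable_fun D f ->
  (\int[mu]_(x in D) f x)%E \is a fin_num -> mu.-integrable D f.
Proof.
move=> mD mf; rewrite integralE fin_numB => /andP[fin_pos fin_neg].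
apply/integrableP; split => //.
have -> : (fun x => `|f x|)%E = (f^\+ \+ f^\-)%E by rewrite -fune_abse.
rewrite ge0_integralD //; [|exact: measurable_funepos|exact: measurable_funeneg].
by apply: lte_add_pinfty; rewrite -ge0_fin_numE // integral_ge0.
Qed.

Lemma measurable_fun_integral_snd d1 d2 (T1 : measurableType d1)
    (T2 : measurableType d2) (R : realType)
    (m2 : {sigma_finite_measure set T2 -> \bar R}) (D : set T2)
    (f : T1 * T2 -> \bar R) :
  measurable D -> measurable_fun setT f ->
  measurable_fun setT (fun x => \int[m2]_(y in D) f (x, y))%E.
Proof.
move=> mD mf.
have mTD : measurable (setT `*` D : set (T1 * T2)) by apply: measurableX.
pose restr (g : T1 * T2 -> \bar R) := g \_ (setT `*` D).
have mF g : measurable_fun setT g -> (forall z, 0 <= g z)%E ->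
    measurable_fun setT (fubini_F m2 (restr g)).
  move=> mg g0; apply: measurable_fun_fubini_tonelli_F.
    by apply/(measurable_restrictT g mTD); exact: measurable_funTS.
  by apply: erestrict_ge0 => z _.
have -> : (fun x => \int[m2]_(y in D) f (x, y))%E =
    (fubini_F m2 (restr f^\+) \- fubini_F m2 (restr f^\-))%E.
  apply/funext => x; rewrite integralE /fubini_F.
  congr (_ - _)%E; rewrite integral_mkcond; apply: eq_integral => y _ /=;
  by rewrite /restr !patchE in_setX in_setT /= ?funeposE ?funenegE.
apply: emeasurable_funB; apply: mF.
- exact: measurable_funepos.
- exact: funepos_ge0.
- exact: measurable_funeneg.
- exact: funeneg_ge0.
Qed.

Lemma measurable_horner (R : realType) (Q : {poly R}) :
  measurable_fun setT (horner Q).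
Proof. exact: continuous_measurable_fun (@continuous_horner _ Q). Qed.

Section RealBounds.
Variable R : realType.

Lemma powR_le1Dn (y a : R) (K : nat) : 0 < y -> 0 <= a <= K%:R ->
  y `^ a <= 1 + y ^+ K.
Proof.
move=> y0 /andP[a0 aK]; have [y1|y1] := leP y 1.
  apply: (@le_trans _ _ (y `^ 0)); first by apply: ger_powR => //; rewrite y0 y1.
  by rewrite powRr0 lerDl exprn_ge0 ?(ltW y0).
apply: (@le_trans _ _ (y `^ K%:R)); first by apply: ler_powR => //; exact: ltW.
by rewrite powR_mulrn ?(ltW y0) // lerDr.
Qed.

Lemma exprS_expRN_le (y : R) (K : nat) : 0 <= y ->
  y ^+ K.+1 * expR (- y) <= 2 ^+ K.+1 * K.+1`!%:R * expR (- y / 2).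
Proof.
move=> y0; have fact_gt0 : (0 : R) < K.+1`!%:R by rewrite ltr0n fact_gt0.
have taylor : (y / 2) ^+ K.+1 / K.+1`!%:R <= expR (y / 2).
  by rewrite (le_trans _ (expR_ge1Dxn K _)) ?lerDr // divr_ge0.
have -> : y ^+ K.+1 = 2 ^+ K.+1 * K.+1`!%:R * ((y / 2) ^+ K.+1 / K.+1`!%:R).
  by rewrite expr_div_n; field; rewrite !gt_eqF ?exprn_gt0.
have -> : expR (- y / 2) = expR (y / 2) * expR (- y).
  by rewrite -expRD; congr expR; field.
by rewrite -mulrA ler_wpM2l ?mulr_ge0 ?exprn_ge0 ?ler0n // ler_wpM2r ?expR_ge0.
Qed.

Lemma powR_expRN_le (y a : R) (K : nat) : 0 < y -> 0 <= a <= K.+1%:R ->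
  y `^ a * expR (- y) <= (1 + 2 ^+ K.+1 * K.+1`!%:R) * expR (- y / 2).
Proof.
move=> y0 aK; apply: (@le_trans _ _ ((1 + y ^+ K.+1) * expR (- y))).
  by rewrite ler_wpM2r ?expR_ge0 ?powR_le1Dn.
rewrite !mulrDl !mul1r lerD ?exprS_expRN_le ?(ltW y0) //.
by rewrite ler_expR; lra.
Qed.

Lemma horner_powR_expRN_le (Q : {poly R}) (b : R) : 0 <= b -> exists C : R,
  forall y, 0 < y -> `|Q.[y]| * y `^ b * expR (- y) <= C * expR (- y / 2).
Proof.
move=> b0; pose K := (size Q + Num.truncn b)%N.
exists ((\sum_(i < size Q) `|Q`_i|) * (1 + 2 ^+ K.+1 * K.+1`!%:R)) => y y0.
rewrite -mulrA -[leRHS]mulrA mulr_suml horner_coef.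
apply: (le_trans (ler_wpM2r _ (ler_norm_sum _ _ _))).
  by rewrite mulr_ge0 ?powR_ge0 ?expR_ge0.
rewrite mulr_suml; apply: ler_sum => i _.
rewrite normrM normrX (ger0_norm (ltW y0)) -mulrA ler_wpM2l // mulrA.
rewrite -powR_mulrn ?(ltW y0) // -powRD; last by rewrite (gt_eqF y0) implybT.
apply: powR_expRN_le => //; rewrite addr_ge0 //= /K -addnS natrD.
by rewrite lerD ?ler_nat ?(ltnW (ltn_ord i)) ?(ltW (truncnS_gt b)).
Qed.

End RealBounds.

Section CauchyLaguerre.
Local Open Scope classical_set_scope.
Variables (R : realType) (alpha : R).
Hypothesis alpha_gt : -1 < alpha.

Local Notation Ipos := (`]0%R, +oo[%classic : set R).

Let Ipos_measurable : measurable Ipos.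
Proof. exact: measurable_itv. Qed.

Let Ipos_gt0 x : Ipos x -> 0 < x.
Proof. by rewrite /= in_itv /= andbT. Qed.

Lemma CLweight_ge0 x y : 0 < x -> 0 < y -> 0 <= CLweight alpha x y.
Proof.
move=> x0 y0; rewrite /CLweight divr_ge0 ?mulr_ge0 ?powR_ge0 ?expR_ge0 //.
by rewrite addr_ge0 ?(ltW x0) ?(ltW y0).
Qed.

Lemma CLweight_bound (Q : {poly R}) x : 0 < x -> exists C : R,
  forall y, 0 < y -> `|Q.[y] * CLweight alpha x y| <= C * expR (- y / 2).
Proof.
move=> x0; have alpha1_ge0 : 0 <= alpha + 1 by rewrite -lerBlDr sub0r ltW.
have [C QC] := horner_powR_expRN_le Q alpha1_ge0.
exists (x `^ alpha / x * C) => y y0.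
have xy0 : 0 < x + y by rewrite addr_gt0.
rewrite normrM (ger0_norm (CLweight_ge0 x0 y0)).
have -> : `|Q.[y]| * CLweight alpha x y =
    (`|Q.[y]| * y `^ (alpha + 1) * expR (- y)) * (x `^ alpha * expR (- x) / (x + y)).
  by rewrite /CLweight expRD; ring.
rewrite [leRHS](_ : _ = C * expR (- y / 2) * (x `^ alpha / x)); last by ring.
apply: ler_pM; first by rewrite !mulr_ge0 ?powR_ge0 ?expR_ge0.
- by rewrite divr_ge0 ?mulr_ge0 ?powR_ge0 ?expR_ge0 ?(ltW xy0).
- exact: QC.
rewrite -mulrA ler_wpM2l ?powR_ge0 //.
apply: (le_trans (ler_piMl _ _)); first by rewrite invr_ge0 (ltW xy0).
  by rewrite expR_le1 oppr_le0 (ltW x0).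
by rewrite lef_pV2 ?posrE // lerDl (ltW y0).
Qed.

(* [(x + y) `^ (-1)] agrees with [1 / (x + y)] on the quadrant; unlike
   inversion, [powR] comes with a measurability lemma. *)
Definition CLintegrand (Q : {poly R}) (z : R * R) : R :=
  Q.[z.2] * (z.1 `^ alpha * z.2 `^ (alpha + 1) * expR (- z.1 - z.2)
    * (z.1 + z.2) `^ (-1)).

Lemma CLintegrandE (Q : {poly R}) x y : 0 < x -> 0 < y ->
  CLintegrand Q (x, y) = Q.[y] * CLweight alpha x y.
Proof.
by move=> x0 y0; rewrite /CLweight /CLintegrand powR_inv1 // addr_ge0 ?(ltW x0) ?(ltW y0).
Qed.

Lemma measurable_CLintegrand (Q : {poly R}) :
  measurable_fun setT (CLintegrand Q).
Proof.
apply: measurable_funM.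
  exact: measurableT_comp (measurable_horner Q) measurable_snd.
apply: measurable_funM; last first.
  apply: measurableT_comp (measurable_powR _) _.
  exact: measurable_funD measurable_fst measurable_snd.
apply: measurable_funM; last first.
  apply: (@measurableT_comp _ _ _ _ _ _ (@expR R)); first exact: measurable_expR.
  exact: measurable_funB (measurable_funN measurable_fst) measurable_snd.
apply: measurable_funM.
  exact: measurableT_comp (measurable_powR _) measurable_fst.
exact: measurableT_comp (measurable_powR _) measurable_snd.
Qed.

Lemma integrable_CLweight (Q : {poly R}) x : 0 < x ->
  lebesgue_measure.-integrable Ipos (fun y => (Q.[y] * CLweight alpha x y)%:E).
Proof.
move=> x0; have [C QC] := CLweight_bound Q x0.
(* [e^(-y/2)] is integrable as twice the exponential density of rate 1/2. *)
have Ipos_exp y : 0 < y -> exponential_pdf 2^-1 y = 2^-1 * expR (- y / 2) :> R.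
  move=> y0; rewrite /exponential_pdf patchE ifT; last first.
    by rewrite inE /= in_itv /= andbT (ltW y0).
  by congr (_ * expR _); lra.
apply: (@le_integrable _ _ _ lebesgue_measure _ Ipos_measurable _
  (fun y => ((C * 2)%:E * (EFin \o exponential_pdf 2^-1) y)%E)).
- apply/measurable_EFinP.
  apply: (eq_measurable_fun (fun y => CLintegrand Q (x, y))).
    by move=> y; rewrite inE => /Ipos_gt0 y0; rewrite CLintegrandE.
  apply: measurable_funTS.
  exact: measurable_fun_pair2 (measurable_CLintegrand Q).
- move=> y /Ipos_gt0 y0; rewrite /= Ipos_exp // lee_fin.
  apply: (le_trans (QC y y0)); rewrite (_ : C * 2 * _ = C * expR (- y / 2)).
    exact: ler_norm.
  by field.
- apply: integrableZl => //.
  by apply: integrableS (integrable_exponential_pdf _) => //.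
Qed.

Definition CLinner (Q : {poly R}) x : R :=
  fine (\int[lebesgue_measure]_(y in Ipos) (Q.[y] * CLweight alpha x y)%:E)%E.

Lemma CLinnerE (Q : {poly R}) x : 0 < x ->
  (\int[lebesgue_measure]_(y in Ipos) (Q.[y] * CLweight alpha x y)%:E)%E =
  (CLinner Q x)%:E.
Proof.
by move=> x0; rewrite fineK // integrable_fin_num // integrable_CLweight.
Qed.

Lemma measurable_CLinner (Q : {poly R}) : measurable_fun Ipos (CLinner Q).
Proof.
apply/measurable_EFinP; apply: (eq_measurable_fun
  (fun x => \int[lebesgue_measure]_(y in Ipos) (CLintegrand Q (x, y))%:E)%E).
  move=> x; rewrite inE => /Ipos_gt0 x0; rewrite /= -CLinnerE //.
  by apply: eq_integral => y; rewrite inE => /Ipos_gt0 y0; rewrite CLintegrandE.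
apply: measurable_funTS.
apply: (measurable_fun_integral_snd lebesgue_measure
  (f := fun z => (CLintegrand Q z)%:E)) => //.
by apply/measurable_EFinP; exact: measurable_CLintegrand.
Qed.

Lemma dint_CLinner (Q : {poly R}) (c : R -> R) :
  dint (fun x y => c x * Q.[y] * CLweight alpha x y) =
  (\int[lebesgue_measure]_(x in Ipos) (c x * CLinner Q x)%:E)%E.
Proof.
apply: eq_integral => x; rewrite inE => /Ipos_gt0 x0.
under eq_integral do rewrite -mulrA EFinM.
by rewrite integralZl ?integrable_CLweight // CLinnerE.
Qed.

Lemma integrable_CLinner (P Q : {poly R}) :
  dint (fun x y => P.[x] * Q.[y] * CLweight alpha x y) \is a fin_num ->
  lebesgue_measure.-integrable Ipos (fun x => (P.[x] * CLinner Q x)%:E).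
Proof.
rewrite dint_CLinner; apply: fin_num_integral_integrable => //.
apply/measurable_EFinP; apply: measurable_funM (measurable_CLinner Q).
exact: measurable_funTS (measurable_horner P).
Qed.

End CauchyLaguerre.

Theorem proposition2 (R : realType) (alpha : R) (p q : nat -> {poly R})
    (h : nat -> R) :
  -1 < alpha ->
  (forall k, p k \is monic /\ size (p k) = k.+1) ->
  (forall k, q k \is monic /\ size (q k) = k.+1) ->
  (forall k l, dint (fun x y => (p k).[x] * (q l).[y] * CLweight alpha x y)
               = ((h k) * (k == l)%:R)%:E) ->
  forall beta k : nat, (k <= beta)%N ->
    dint (fun x y => x ^+ beta * (q k).[y] * CLweight alpha x y)
    = (bcoef (fun m i => (p m)`_i) beta (beta - k) * h k)%:E.
Proof.
move=> alpha_gt p_monic _ orth beta k le_kb.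
have p_lead m : (p m)`_m = 1.
  by have [/monicP <- size_p] := p_monic m; rewrite lead_coefE size_p.
have p_size m : (size (p m) <= m.+1)%N by have [_ ->] := p_monic m.
have Xn_eval x : x ^+ beta =
    \sum_(j < beta.+1) bcoef (fun m i => (p m)`_i) beta j * (p (beta - j)%N).[x].
  rewrite -hornerXn (polyXn_bcoef beta p_lead p_size) horner_sum.
  by apply: eq_bigr => j _; rewrite hornerZ.
have int_p m : lebesgue_measure.-integrable `]0, +oo[%classic
    (fun x => ((p m).[x] * CLinner alpha (q k) x)%:E).
  by apply: integrable_CLinner => //; rewrite orth.
rewrite (dint_CLinner alpha_gt).
under eq_integral => x _.
  rewrite Xn_eval mulr_suml -sumEFin.
  under eq_bigr do rewrite -mulrA EFinM.
  over.
rewrite integral_sum //; last by move=> j; exact: integrableZl.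
under eq_bigr do rewrite integralZl // -(dint_CLinner alpha_gt) orth -EFinM.
rewrite sumEFin; congr EFin.
have lt_kb : (beta - k < beta.+1)%N by rewrite ltnS leq_subr.
rewrite (bigD1 (Ordinal lt_kb)) //= subKn // eqxx mulr1 big1 ?addr0 // => j ne_j.
rewrite (_ : (beta - j == k)%N = false) ?mulr0 //.
apply: contraNF ne_j => /eqP eq_k; apply/eqP/val_inj => /=.
by have := ltn_ord j; lia.
Qed.
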